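(* Let $k\ge2$ and $n\le0$, and write $q=q_{n,k}$, $r=r_{n,k}$. Set $$d_{n,k}=\begin{cases}|n|+1-k,& r=0,\\ |n|+1-kr,& 1\le r\le k-1.\end{cases}$$ Then $\mathcal{F}_{n,k}\equiv0$ if and only if $d_{n,k}<0$. If $d_{n,k}\ge0$, then $\mathcal{F}_{n,k}(x)$ has degree exactly $d_{n,k}$, and its leading term is $x^{|n|+1-k}$ when $r=0$, and $(-1)^r\binom{q-1}{r-1}x^{|n|+1-kr}$ when $1\le r\le k-1$. In particular, for $k\ge3$ the degree of the nonvanishing polynomials $\mathcal{F}_{n,k}$, $n<0$, is not a monotonically nondecreasing function of $|n|$.
   Context: For $k\ge2$, the polynomials $\mathcal{F}_{n,k}(x)\in\mathbb{Z}[x]$ ($n\in\mathbb{Z}$) are defined by $\mathcal{F}_{1,k}=1$, $\mathcal{F}_{n,k}=0$ for $n=0,-1,\dots,-(k-2)$, and $\mathcal{F}_{n,k}(x)=\sum_{j=1}^{k}x^{k-j}\mathcal{F}_{n-j,k}(x)$ for all $n\in\mathbb{Z}$. This recurrence is used upwards for $n\ge2$, and downwards for $n\le-(k-1)$ as $\mathcal{F}_{n,k}=\mathcal{F}_{n+k,k}-\sum_{j=1}^{k-1}x^j\mathcal{F}_{n+j,k}$. For $n\le0$, set $q_{n,k}=\lfloor(|n|+1)/k\rfloor$ and let $r_{n,k}\in\{0,\dots,k-1\}$ be the residue of $|n|+1$ modulo $k$. Then $|n|+1=kq_{n,k}+r_{n,k}$. *)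

From HB Require Import structures.
From mathcomp Require Import all_boot all_order all_algebra.
Set Implicit Arguments. Unset Strict Implicit. Unset Printing Implicit Defensive.
Import Order.TTheory GRing.Theory Num.Theory.
Local Open Scope ring_scope.

Fixpoint recseq (T : Type) (f : seq T -> T) (m : nat) : seq T :=
  match m with
  | 0 => [:: f [::]]
  | m'.+1 => let s := recseq f m' in rcons s (f s)
  end.

(* Downward part: Fdown k m = F_{1-m,k}.  F_1 = 1, F_0 = ... = F_{-(k-2)} = 0,
   and for 1 - m <= -(k-1) (i.e. m >= k):
   F_{1-m} = F_{1-m+k} - sum_{j=1}^{k-1} x^j F_{1-m+j}. *)
Definition stepDown (k : nat) (s : seq {poly int}) : {poly int} :=
  let m := size s in
  if m == 0%N then 1
  else if (m < k)%N then 0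
  else nth 0 s (m - k) - \sum_(1 <= j < k) 'X^j * nth 0 s (m - j).

Definition Fdown (k m : nat) : {poly int} := nth 0 (recseq (stepDown k) m) m.

(* Upward part: Fup k i = F_{i-(k-2),k}; F_{-(k-2)} = ... = F_0 = 0, F_1 = 1,
   and for n >= 2: F_n = sum_{j=1}^k x^(k-j) F_{n-j}. *)
Definition stepUp (k : nat) (s : seq {poly int}) : {poly int} :=
  let i := size s in
  if (i < k.-1)%N then 0
  else if i == k.-1 then 1
  else \sum_(1 <= j < k.+1) 'X^(k - j) * nth 0 s (i - j).

Definition Fup (k i : nat) : {poly int} := nth 0 (recseq (stepUp k) i) i.

Definition Fnk (n : int) (k : nat) : {poly int} :=
  match n with
  | Posz 0 => Fdown k 1
  | Posz m.+1 => Fup k (m + k - 1)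
  | Negz m => Fdown k m.+2
  end.

Definition qnk (n : int) (k : nat) : nat := ((`|n|%N).+1 %/ k)%N.
Definition rnk (n : int) (k : nat) : nat := ((`|n|%N).+1 %% k)%N.

Definition dnk (n : int) (k : nat) : int :=
  if rnk n k == 0%N then (`|n|%N.+1)%:Z - k%:Z
  else (`|n|%N.+1)%:Z - (k * rnk n k)%N%:Z.

(* Telescoping the k-term recurrence of D m := F_{1-m} gives, for m > k, the
   three-term recurrence D m = (1 + x^k) D (m - k) - x D (m - k - 1).  For
   m = qk + r the right-hand side involves D ((q-1)k + r) and D ((q-1)k + r-1),
   so induction on q tracks leading terms: for r <= 1 the first term dominates;
   for 2 <= r <= q both terms have degree m - kr and their leading coefficients
   combine by Pascal's rule into (-1)^r C(q-1, r-1); for q < r both vanish.  The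
   crude bound deg D m <= m - k controls the terms that do not compete. *)
From HB Require Import structures.
From mathcomp Require Import all_boot all_order all_algebra.
From mathcomp Require Import zify ring.
Set Implicit Arguments. Unset Strict Implicit. Unset Printing Implicit Defensive.
Import Order.TTheory GRing.Theory Num.Theory.
Local Open Scope ring_scope.

Section RecSeq.
Variables (T : Type) (f : seq T -> T) (x0 : T).

Lemma size_recseq m : size (recseq f m) = m.+1.
Proof. by elim: m => [|m IH] //=; rewrite size_rcons IH. Qed.

Lemma nth_recseq m i : (i <= m)%N -> nth x0 (recseq f m) i = nth x0 (recseq f i) i.
Proof.
elim: m => [|m IH]; first by rewrite leqn0 => /eqP ->.
rewrite leq_eqVlt => /orP [/eqP -> //| lt_im].
by rewrite /= nth_rcons size_recseq lt_im IH.
Qed.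

Lemma nth_recseqS m : nth x0 (recseq f m.+1) m.+1 = f (recseq f m).
Proof. by rewrite /= nth_rcons size_recseq ltnn eqxx. Qed.

End RecSeq.
Arguments nth_recseq {T f x0 m i}.

Section LeadTerm.
Variable R : nzRingType.
Implicit Types (p q : {poly R}) (n : nat) (a b c : R).

Definition has_lead_term p n c := size p = n.+1 /\ lead_coef p = c.

Lemma has_lead_term_neq0 p n c : has_lead_term p n c -> p != 0.
Proof. by case=> size_p _; rewrite -size_poly_gt0 size_p. Qed.

Lemma has_lead_termDl p q n c :
  has_lead_term p n c -> (size q <= n)%N -> has_lead_term (p + q) n c.
Proof.
move=> [size_p lead_p] size_q; have lt_qp : (size q < size p)%N by rewrite size_p.
by split; [rewrite size_polyDl | rewrite lead_coefDl].
Qed.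

Lemma has_lead_termD p q n a b : has_lead_term p n a -> has_lead_term q n b ->
  a + b != 0 -> has_lead_term (p + q) n (a + b).
Proof.
move=> [size_p lead_p] [size_q lead_q] ab_neq0.
have coef_n : (p + q)`_n = a + b by rewrite coefD -lead_p -lead_q !lead_coefE size_p size_q.
have size_le : (size (p + q)%R <= n.+1)%N.
  by rewrite (leq_trans (size_polyD p q)) // size_p size_q maxnn.
have size_gt : (n < size (p + q)%R)%N.
  by rewrite ltnNge; apply: contra ab_neq0 => /leq_sizeP/(_ n (leqnn n)); rewrite coef_n => ->.
have size_pq : size (p + q) = n.+1 by apply/eqP; rewrite eqn_leq size_le size_gt.
by split; rewrite // lead_coefE size_pq.
Qed.

Lemma has_lead_termN p n c : has_lead_term p n c -> has_lead_term (- p) n (- c).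
Proof. by case=> size_p lead_p; split; rewrite ?size_polyN ?lead_coefN ?lead_p. Qed.

Lemma has_lead_termXM p n c : has_lead_term p n c -> has_lead_term ('X * p) n.+1 c.
Proof.
move=> lt_p; have p_neq0 := has_lead_term_neq0 lt_p; case: lt_p => size_p lead_p.
by rewrite -commr_polyX; split; rewrite ?size_mulX ?lead_coefMX ?size_p.
Qed.

Lemma has_lead_term_1addXnM k p n c : (0 < k)%N ->
  has_lead_term p n c -> has_lead_term ((1 + 'X^k) * p) (n + k) c.
Proof.
move=> k_gt0 lt_p; have p_neq0 := has_lead_term_neq0 lt_p; case: lt_p => size_p lead_p.
have mon : (1 + 'X^k : {poly R}) \is monic by rewrite addrC -polyC1 monicXnaddC.
split; last by rewrite lead_coef_monicM.
by rewrite size_monicM // size_p addrC -polyC1 size_XnaddC // addnS addSn addnC.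
Qed.

Lemma size_polyXMleq p : (size ('X * p)%R <= (size p).+1)%N.
Proof. by rewrite (leq_trans (size_polyMleq _ _)) // size_polyX. Qed.

End LeadTerm.

Lemma signed_binS (R : nzRingType) n r :
  (-1) ^+ r.+2 * ('C(n, r.+1))%:R - (-1) ^+ r.+1 * ('C(n, r))%:R
    = (-1) ^+ r.+2 * ('C(n.+1, r.+1))%:R :> R.
Proof. by rewrite binS natrD mulrDr exprS mulN1r !mulNr. Qed.

Section Fdown.
Variable k : nat.
Hypothesis k_ge2 : (2 <= k)%N.
Local Notation D := (Fdown k).

Lemma Fdown0 : D 0 = 1.
Proof. by []. Qed.

Lemma FdownS m : D m.+1 = stepDown k (recseq (stepDown k) m).
Proof. by rewrite /Fdown nth_recseqS. Qed.

Lemma Fdown_small m : (0 < m < k)%N -> D m = 0.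
Proof. by case: m => [//|m] /andP[_ lt_mk]; rewrite FdownS /stepDown size_recseq /= lt_mk. Qed.

Lemma Fdown_rec m : (k <= m)%N ->
  D m = D (m - k) - \sum_(1 <= j < k) 'X^j * D (m - j).
Proof.
case: m => [|m] le_km; first by lia.
rewrite FdownS /stepDown size_recseq /= ltnNge le_km /=.
rewrite (nth_recseq (_ : m.+1 - k <= m)%N); last by lia.
congr (_ - _); apply: eq_big_nat => j /andP[j_gt0 lt_jk].
by rewrite (nth_recseq (_ : m.+1 - j <= m)%N) //; lia.
Qed.

Lemma Fdown_k : D k = 1.
Proof.
rewrite Fdown_rec // subnn Fdown0 big_nat big1 ?subr0 // => j /andP[j_gt0 lt_jk].
by rewrite Fdown_small ?mulr0 //; lia.
Qed.

(* With the window sums [W m = \sum_(j < k) 'X^j * D (m - j)] the recurrence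
   reads [W m = D (m - k)], while [W m - 'X * W m.-1] telescopes to
   [D m - 'X^k * D (m - k)]. *)
Lemma Fdown_rec3 m : (k < m)%N ->
  D m = (1 + 'X^k) * D (m - k) - 'X * D (m - k - 1).
Proof.
move=> lt_km; pose W i := \sum_(j < k) 'X^j * D (i - j).
have W_rec i : (k <= i)%N -> W i = D (i - k).
  move=> le_ki; rewrite /W -(big_mkord xpredT (fun j => 'X^j * D (i - j))).
  by rewrite big_ltn; last lia; rewrite expr0 mul1r subn0 (Fdown_rec le_ki) subrK.
have W_tel : W m - 'X * W m.-1 = D m - 'X^k * D (m - k).
  rewrite /W; case: k k_ge2 lt_km => [//|k'] _ lt_km.
  rewrite big_ord_recl big_ord_recr /= expr0 mul1r subn0 mulrDr mulr_sumr.
  rewrite (eq_bigr (fun i : 'I_k' => 'X * ('X^i * Fdown k'.+1 (m.-1 - i)))); last first.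
    by move=> i _; rewrite /bump add1n mulrA -exprS; congr (_ * Fdown _ _); lia.
  by rewrite opprD addrA addrK mulrA -exprS; congr (_ - _ * Fdown _ _); lia.
rewrite W_rec ?W_rec in W_tel; [|lia|lia].
have -> : (m - k - 1 = m.-1 - k)%N by lia.
by rewrite mulrDl mul1r addrAC W_tel subrK.
Qed.

Lemma size_Fdown_le m : (size (D m) <= (m - k).+1)%N.
Proof.
elim/ltn_ind: m => m IH.
case: (ltngtP m k) => [lt_mk | lt_km | ->]; last by rewrite Fdown_k size_poly1.
  case: m {IH} lt_mk => [|m] lt_mk; first by rewrite Fdown0 size_poly1.
  by rewrite Fdown_small ?size_poly0.
rewrite Fdown_rec3 // (leq_trans (size_polyD _ _)) // geq_max size_polyN; apply/andP; split.
  have [lt_mk2 | le_km2] := ltnP (m - k) k.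
    by rewrite Fdown_small ?mulr0 ?size_poly0 //; lia.
  rewrite (leq_trans (size_polyMleq _ _)) // addrC -polyC1 size_XnaddC; last by lia.
  by rewrite addSn (leq_trans (leq_add (leqnn k) (IH _ _))); lia.
apply: leq_trans (size_polyXMleq _) _; rewrite ltnS (leq_trans (IH _ _)); lia.
Qed.

Lemma Fdown_mulk_lead_term Q : has_lead_term (D (Q.+1 * k)) (Q * k) 1.
Proof.
elim: Q => [|Q IH]; first by rewrite mul1n Fdown_k; split; rewrite ?size_poly1 ?lead_coef1.
rewrite Fdown_rec3; last by nia.
rewrite mulSnr addnK [X in has_lead_term _ X]mulSnr.
apply: has_lead_termDl; first by apply: has_lead_term_1addXnM IH; lia.
rewrite size_polyN; apply: leq_trans (size_polyXMleq _) _.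
by apply: leq_ltn_trans (size_Fdown_le _) _; nia.
Qed.

Lemma Fdown_eq0 Q r : (0 < r < k)%N -> (Q < r)%N -> D (Q * k + r) = 0.
Proof.
elim: Q r => [|Q IH] r r_bounds lt_Qr; first by rewrite mul0n add0n Fdown_small.
rewrite Fdown_rec3; last by nia.
have -> : (Q.+1 * k + r - k = Q * k + r)%N by nia.
have -> : (Q * k + r - 1 = Q * k + r.-1)%N by lia.
by rewrite !IH ?mulr0 ?subr0 //; lia.
Qed.

Lemma Fdown_lead_term Q r : (0 < r < k)%N -> (r <= Q)%N ->
  has_lead_term (D (Q * k + r)) (Q * k + r - k * r) ((-1) ^+ r * ('C(Q.-1, r.-1))%:R).
Proof.
elim: Q r => [|Q IH] r r_bounds le_rSQ; first by lia.
rewrite Fdown_rec3; last by nia.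
have -> : (Q.+1 * k + r - k = Q * k + r)%N by nia.
have -> : (Q * k + r - 1 = Q * k + r.-1)%N by lia.
have [eq_rQ | lt_rQ] := eqVneq r Q.+1.
  subst r; rewrite Fdown_eq0 ?mulr0 ?sub0r //=.
  have -> : (Q.+1 * k + Q.+1 - k * Q.+1 = Q.+1)%N by nia.
  rewrite binn exprS mulN1r mulr1; apply/has_lead_termN/has_lead_termXM.
  case: Q IH r_bounds {le_rSQ} => [|Q] IH r_bounds.
    by rewrite Fdown0; split; rewrite ?size_poly1 ?lead_coef1.
  have := IH Q.+1 _ (leqnn _); rewrite binn mulr1.
  have -> : (Q.+1 * k + Q.+1 - k * Q.+1 = Q.+1)%N by nia.
  by apply; lia.
have -> : (Q.+1 * k + r - k * r = Q * k + r - k * r + k)%N by nia.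
have {lt_rQ le_rSQ} le_rQ : (r <= Q)%N by lia.
case: r r_bounds le_rQ => [//|[|r]] r_bounds le_rQ.
  have := IH 1%N r_bounds le_rQ; rewrite !bin0 addn0 => lead_r.
  apply: has_lead_termDl; first by apply: has_lead_term_1addXnM lead_r; lia.
  rewrite size_polyN; apply: leq_trans (size_polyXMleq _) _.
  by apply: leq_ltn_trans (size_Fdown_le _) _; nia.
have lead_r := IH r.+2 r_bounds le_rQ.
have lead_r1 := IH r.+1 (_ : 0 < r.+1 < k)%N (ltnW le_rQ).
have Pascal := signed_binS int Q.-1 r; rewrite (ltn_predK le_rQ) in Pascal.
rewrite /= -Pascal; apply: has_lead_termD.
- by apply: has_lead_term_1addXnM lead_r; lia.
- apply: has_lead_termN; rewrite [X in has_lead_term _ X](_ : _ = (Q * k + r.+1 - k * r.+1).+1).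
    by apply/has_lead_termXM/lead_r1; lia.
  by nia.
- by rewrite Pascal mulf_neq0 ?signr_eq0 // pnatr_eq0 -lt0n bin_gt0; lia.
Qed.

Lemma Fnk_nonpos n : n <= 0 -> Fnk n k = D (`|n|%N).+1.
Proof. by case: n => [[|m]|m]. Qed.

Lemma Fnk_nonpos_lead_term n : n <= 0 ->
  if dnk n k < 0 then Fnk n k = 0
  else has_lead_term (Fnk n k) `|dnk n k|
         (if rnk n k == 0%N then 1
          else (-1) ^+ rnk n k * ('C((qnk n k).-1, (rnk n k).-1))%:R).
Proof.
move=> n_le0; rewrite Fnk_nonpos // /dnk /rnk /qnk.
move: (`|n|%N).+1 (ltn0Sn `|n|%N) => m m_gt0.
have lt_rk : (m %% k < k)%N by rewrite ltn_mod; lia.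
move: (divn_eq m k) lt_rk; move: (m %/ k)%N (m %% k)%N => Q r m_eq lt_rk.
subst m; case: (posnP r) => [r0 | r_gt0].
  subst r; case: Q m_gt0 => [//|Q] _.
  rewrite subr_lt0 ltz_nat ltnNge (_ : k <= Q.+1 * k + 0)%N /=; last by nia.
  rewrite addn0 subzn ?leq_pmull // absz_nat (_ : Q.+1 * k - k = Q * k)%N; last by lia.
  exact: Fdown_mulk_lead_term.
have [lt_Qr | le_rQ] := ltnP Q r.
  by rewrite subr_lt0 ltz_nat (_ : Q * k + r < k * r)%N ?Fdown_eq0 //; nia.
rewrite subr_lt0 ltz_nat ltnNge (_ : k * r <= Q * k + r)%N /=; last by nia.
rewrite subzn ?absz_nat; last by nia.
by apply: Fdown_lead_term => //; lia.
Qed.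
End Fdown.

Theorem mainTheorem10 (k : nat) (hk : (2 <= k)%N) :
  (forall n : int, n <= 0 ->
     (Fnk n k = 0 <-> dnk n k < 0) /\
     (0 <= dnk n k ->
        size (Fnk n k) = (`|dnk n k|%N).+1 /\
        lead_coef (Fnk n k) =
          (if rnk n k == 0%N then 1
           else (-1) ^+ rnk n k * ('C((qnk n k).-1, (rnk n k).-1))%:R))) /\
  ((3 <= k)%N ->
     exists n1 n2 : int,
       [/\ n1 < 0, n2 < 0 & (`|n1| < `|n2|)%N] /\
       [/\ Fnk n1 k != 0, Fnk n2 k != 0 &
           ((size (Fnk n2 k)).-1 < (size (Fnk n1 k)).-1)%N]).
Proof.
split=> [n n_le0 | k_ge3].
  have := Fnk_nonpos_lead_term hk n_le0.
  case: ltrP => [d_lt0 F_eq0 | d_ge0 F_lead]; first by rewrite F_eq0.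
  split=> [|_]; last exact: F_lead.
  by split=> // F_eq0; have := has_lead_term_neq0 F_lead; rewrite F_eq0 eqxx.
(* F_{-2k} has degree k + 1 while F_{-(2k+1)} has degree 2. *)
exists (- (2 * k)%:Z), (- (2 * k).+1%:Z).
rewrite !Fnk_nonpos ?oppr_le0 // !abszN !absz_nat -[(2 * k).+2]addn2 -[(2 * k).+1]addn1.
have [size1 _] := @Fdown_lead_term k hk 2 1 hk isT.
have [size2 _] := @Fdown_lead_term k hk 2 2 k_ge3 isT.
rewrite -!size_poly_gt0 size1 size2 !oppr_lt0 !ltz_nat.
by split; split=> //; lia.
Qed.
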